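(* Let $v_i$ be a node and let $\mathcal{F}_{v_i}=(\mathcal{F}_{v_i}[1],\dots,\mathcal{F}_{v_i}[p])$ be a fixed enumeration of its maximal frequent nodes, with initial patterns $P_1,\dots,P_p$ and bipartite graphs $G_1,\dots,G_p$ as defined in the context. Then Rule 1 assigns every frequent node $v_r\in\mathcal{U}_{v_i}$ to one and only one pattern $P_j$, i.e., there is exactly one $j\in\{1,\dots,p\}$ with $v_r\in\alpha(P_j,G_j)$.
   Context: Let $\mathcal{A}=\{A_1,\dots,A_m\}$ be binary attributes and $\mathcal{D}$ a dataset of $n$ tuples; for a tuple $t$, $\mathcal{A}_t=\{A_k: t[A_k]\ne 0\}$. Nodes correspond to attribute subsets: node $v_j$ corresponds to $\mathcal{A}_j\subseteq\mathcal{A}$, with bit vector $\mathcal{B}(v_j)\in\{0,1\}^m$ whose bit $k$ is $1$ iff $A_k\in\mathcal{A}_j$. The lattice $\mathcal{L}_{\mathcal{A}_i}$ has as nodes all subsets of $\mathcal{A}_i$; a parent of $v_j$ in it is a node whose set is $\mathcal{A}_j$ plus one more attribute of $\mathcal{A}_i$. Let $Q(v_j,\mathcal{D})=\{t\in\mathcal{D}:\mathcal{A}_j\subseteq\mathcal{A}_t\}$. For a threshold $\tau\in(0,1]$, $v_j$ is frequent iff $|Q(v_j,\mathcal{D})|\ge\tau n$. $\mathcal{U}_{v_i}$ is the set of frequent nodes of $\mathcal{L}_{\mathcal{A}_i}$, and $\mathcal{F}_{v_i}$ (maximal frequent nodes) is the set of frequent nodes of $\mathcal{L}_{\mathcal{A}_i}$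 having no frequent parent in $\mathcal{L}_{\mathcal{A}_i}$. A pattern is a string $P\in\{0,1,X\}^m$; its coverage $\mathrm{COV}(P)$ is the set of nodes $v$ such that for all $k$, $P[k]=1\Rightarrow A_k\in\mathcal{A}_v$ and $P[k]=0\Rightarrow A_k\notin\mathcal{A}_v$. The initial pattern $P_j$ of $v_{j'}=\mathcal{F}_{v_i}[j]$ is obtained from $\mathcal{B}(v_{j'})$ by replacing every $1$ by $X$. The bipartite graph $G_j$ has top-level nodes $\{A_k: A_k\in\mathcal{A}_{j'}\}$, bottom-level nodes $\{P_l:1\le l<j\}$, and an edge $\xi_{k,l}$ from $A_k$ to $P_l$ iff $A_k\in\mathcal{A}_{j'}$ and $P_l[k]=0$ (i.e., $A_k\notin\mathcal{A}_{l'}$ where $v_{l'}=\mathcal{F}_{v_i}[l]$). Rule 1: a node $v_{l'}\in\mathrm{COV}(P_j)$ is assigned to the partition of $P_j$ (written $v_{l'}\in\alpha(P_j,G_j)$) iff for every bottom-level node $P_r$ of $G_j$ there is at least one top-level attribute node $A_k$ with $A_k\in\mathcal{A}_{l'}$ such that the edge $\xi_{k,r}$ belongs to $G_j$; nodes not in $\mathrm{COV}(P_j)$ are not assigned to $P_j$. *)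

From HB Require Import structures.
From mathcomp Require Import all_boot all_order all_algebra.
Set Implicit Arguments. Unset Strict Implicit. Unset Printing Implicit Defensive.
Import Order.TTheory GRing.Theory Num.Theory.

(* Attributes A_1..A_m are indexed by 'I_m.  A node is identified with its
   attribute subset : {set 'I_m} (equivalently, its bit vector B(v)).
   A tuple t is a binary vector {ffun 'I_m -> bool}; t[A_k] <> 0 iff t k. *)

Definition tuple_attrs (m : nat) (t : {ffun 'I_m -> bool}) : {set 'I_m} :=
  [set k | t k].

Definition Qcount (m : nat) (D : seq {ffun 'I_m -> bool}) (v : {set 'I_m}) : nat :=
  count (fun t => v \subset tuple_attrs t) D.

Definition frequent (R : realFieldType) (tau : R) (m : nat)
  (D : seq {ffun 'I_m -> bool}) (v : {set 'I_m}) : Prop :=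
  (tau * (size D)%:R <= (Qcount D v)%:R)%R.

Definition in_lattice (m : nat) (Ai v : {set 'I_m}) : Prop := v \subset Ai.

Definition lattice_parent (m : nat) (Ai v w : {set 'I_m}) : Prop :=
  exists2 k, (k \in Ai) && (k \notin v) & w = k |: v.

Definition in_U (R : realFieldType) (tau : R) (m : nat)
  (D : seq {ffun 'I_m -> bool}) (Ai v : {set 'I_m}) : Prop :=
  in_lattice Ai v /\ frequent tau D v.

Definition in_F (R : realFieldType) (tau : R) (m : nat)
  (D : seq {ffun 'I_m -> bool}) (Ai v : {set 'I_m}) : Prop :=
  in_U tau D Ai v /\ ~ (exists w, lattice_parent Ai v w /\ frequent tau D w).

Inductive psym := P0 | P1 | PX.
Definition pattern (m : nat) := 'I_m -> psym.

Definition COV (m : nat) (P : pattern m) (v : {set 'I_m}) : Prop :=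
  forall k, (P k = P1 -> k \in v) /\ (P k = P0 -> k \notin v).

Definition init_pattern (m : nat) (S : {set 'I_m}) : pattern m :=
  fun k => if k \in S then PX else P0.

(* Fs is the enumeration F_{v_i}[1..p], here 0-indexed: F[j] = nth set0 Fs j *)
Definition Fnode (m : nat) (Fs : seq {set 'I_m}) (j : nat) : {set 'I_m} :=
  nth set0 Fs j.

Definition Pj (m : nat) (Fs : seq {set 'I_m}) (j : nat) : pattern m :=
  init_pattern (Fnode Fs j).

(* G_j: top nodes A_k with k \in F[j]; bottom nodes P_l with l < j;
   edge xi_{k,l} iff k \in F[j] and P_l[k] = 0. *)
Definition G_top (m : nat) (Fs : seq {set 'I_m}) (j : nat) (k : 'I_m) : Prop :=
  k \in Fnode Fs j.
Definition G_bottom (j l : nat) : Prop := (l < j)%N.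
Definition G_edge (m : nat) (Fs : seq {set 'I_m}) (j : nat) (k : 'I_m) (l : nat) : Prop :=
  G_top Fs j k /\ G_bottom j l /\ Pj Fs l k = P0.

Definition alpha (m : nat) (Fs : seq {set 'I_m}) (j : nat) (v : {set 'I_m}) : Prop :=
  COV (Pj Fs j) v /\
  forall r, G_bottom j r -> exists k, G_top Fs j k /\ k \in v /\ G_edge Fs j k r.

From mathcomp Require Import all_boot all_order all_algebra.

Set Implicit Arguments.
Unset Strict Implicit.
Unset Printing Implicit Defensive.

(* Rule 1 places [v] in the partition of [P_j] exactly when [F[j]] is the first
   maximal frequent node of the enumeration that contains [v]: covering by the
   initial pattern [P_j] means [v \subset F[j]], and the edge condition towards
   every earlier [P_r] means [v] is not contained in [F[r]].  Every frequent
   node lies below some maximal frequent node (take a frequent superset of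
   maximal size), so this first index exists, and it is unique. *)

Section RuleOne.

Variables (m : nat) (Fs : seq {set 'I_m}).
Implicit Types v : {set 'I_m}.

Definition first_superset v := find (fun S : {set 'I_m} => v \subset S) Fs.

Lemma alpha_subset j v : alpha Fs j v -> v \subset Fnode Fs j.
Proof.
case=> cov _; apply/subsetP=> k kv; apply/negPn/negP=> kF.
have [_ /(_ _)/negP] := cov k.
by rewrite /Pj /init_pattern (negbTE kF) kv; apply.
Qed.

Lemma alpha_not_subset_before j v r :
  alpha Fs j v -> (r < j)%N -> ~~ (v \subset Fnode Fs r).
Proof.
case=> _ edges rj; have [k [_ [kv [_ [_ Prk]]]]] := edges r rj.
apply/subsetPn; exists k => //; move: Prk.
by rewrite /Pj /init_pattern; case: (k \in Fnode Fs r).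
Qed.

Lemma alpha_intro j v :
  v \subset Fnode Fs j -> (forall r, (r < j)%N -> ~~ (v \subset Fnode Fs r)) ->
  alpha Fs j v.
Proof.
move=> vFj before; split.
  move=> k; rewrite /Pj /init_pattern; case: ifP => kFj; split=> // _.
  by apply: contraFN kFj; apply: (subsetP vFj).
move=> r rj; have /subsetPn [k kv kFr] := before r rj.
have kFj := subsetP vFj k kv.
by exists k; do !split=> //; rewrite /Pj /init_pattern (negbTE kFr).
Qed.

Lemma alphaP j v : (j < size Fs)%N ->
  alpha Fs j v <-> j = first_superset v.
Proof.
rewrite /first_superset => j_lt; split=> [vj | j_first]; last first.
  have has_v : has (fun S : {set 'I_m} => v \subset S) Fs.
    by rewrite has_find -j_first.
  apply: alpha_intro; first by rewrite /Fnode j_first (nth_find set0 has_v).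
  by move=> r; rewrite j_first => /(before_find set0) /negbT.
have has_v : has (fun S : {set 'I_m} => v \subset S) Fs.
  by apply/(has_nthP set0); exists j; last exact: alpha_subset vj.
set first := find _ Fs.
case: (ltngtP j first) => // [j_lt_first | first_lt_j].
- by have := before_find set0 j_lt_first; rewrite /= alpha_subset.
- have := alpha_not_subset_before vj first_lt_j.
  by rewrite /Fnode (nth_find set0 has_v).
Qed.

End RuleOne.

Lemma maximal_frequent_superset (R : realFieldType) (tau : R) m
    (D : seq {ffun 'I_m -> bool}) (Ai v : {set 'I_m}) :
  in_U tau D Ai v -> exists2 S, in_F tau D Ai S & v \subset S.
Proof.
case=> vAi vfreq.
pose frequent_above (S : {set 'I_m}) := [&& v \subset S, S \subset Ai &
    (tau * (size D)%:R <= (Qcount D S)%:R)%R].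
have frequent_above_v : frequent_above v by apply/and3P.
have [S /and3P [vS SAi Sfreq] S_max] :=
  arg_maxnP (fun S : {set 'I_m} => #|S|) frequent_above_v.
exists S => //; split=> // -[_ [[k /andP [kAi kS] ->] kSfreq]].
have /S_max : frequent_above (k |: S).
  by rewrite /frequent_above subsetU ?vS ?orbT // subUset sub1set kAi SAi kSfreq.
by rewrite cardsU1 kS /= ltnn.
Qed.

Theorem theorem3 (R : realFieldType) (tau : R) (m : nat)
  (D : seq {ffun 'I_m -> bool}) (Ai : {set 'I_m}) (Fs : seq {set 'I_m}) :
  (0 < tau)%R -> (tau <= 1)%R ->
  uniq Fs ->
  (forall S, S \in Fs <-> in_F tau D Ai S) ->
  forall v, in_U tau D Ai v ->
  exists! j, (j < size Fs)%N /\ alpha Fs j v.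
Proof.
move=> _ _ _ Fs_maximal v vU.
have [S /Fs_maximal SFs vS] := maximal_frequent_superset vU.
have has_v : has (fun S : {set 'I_m} => v \subset S) Fs by apply/hasP; exists S.
have first_lt : (first_superset Fs v < size Fs)%N by rewrite -has_find.
exists (first_superset Fs v).
split=> [|j [j_lt /(alphaP _ j_lt) //]].
by split=> //; apply/(alphaP _ first_lt).
Qed.
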